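(* Let $q$ be a prime power and $n\ge0$. Let $s_A(n,q)$, $c_A(n,q)$, $ss_A(n,q)$ be the proportions of separable, cyclic, and semisimple elements of $A(n,q)$, respectively. Then \[ s_A(n,q)\le ss_A(n,q)\le s_A(n,q)+(1-c_A(n,q)). \]
   Context: $A(n,q)$ is the group of matrices $x\in GL(n+1,q)$ with $x_{11}=1$ and $x_{j1}=0$ for $j\ge2$, viewed in $GL(n+1,q)$. A matrix is separable if its characteristic polynomial is square-free, cyclic if its minimal polynomial equals its characteristic polynomial, and semisimple if it is diagonalizable over the algebraic closure of $\mathbb{F}_q$. *)

From HB Require Import structures.
From mathcomp Require Import all_boot all_order all_algebra all_field.
From mathcomp Require Import boolp.
Set Implicit Arguments. Unset Strict Implicit. Unset Printing Implicit Defensive.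
Import GRing.Theory.
Local Open Scope ring_scope.

Definition alg_closure (F : finFieldType) : closedFieldType :=
  projT1 (countable_algebraic_closure F).
Definition to_closure (F : finFieldType) : {rmorphism F -> alg_closure F} :=
  proj1_sig (projT2 (countable_algebraic_closure F)).

(* A(n,q): matrices x in GL(n+1,q) with first column (1,0,...,0)^T. *)
Definition Aset (F : finFieldType) (n : nat) : {set 'M[F]_n.+1} :=
  [set x : 'M[F]_n.+1 | (x \in unitmx) &&
     [forall i : 'I_n.+1, x i ord0 == (i == ord0)%:R]].

Definition squarefree_poly (F : fieldType) (p : {poly F}) : Prop :=
  forall d : {poly F}, d * d %| p -> (size d <= 1)%N.

Definition separable_mx (F : fieldType) (m : nat) (x : 'M[F]_m.+1) : Prop :=
  squarefree_poly (char_poly x).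

Definition cyclic_mx (F : fieldType) (m : nat) (x : 'M[F]_m.+1) : Prop :=
  mxminpoly x = char_poly x.

Definition semisimple_mx (F : finFieldType) (m : nat) (x : 'M[F]_m.+1) : Prop :=
  diagonalizable (map_mx (to_closure F) x).

Definition propA (F : finFieldType) (n : nat) (P : 'M[F]_n.+1 -> Prop) : rat :=
  (#|[set x in Aset F n | `[< P x >]]|%:R / #|Aset F n|%:R)%R.

Definition sA (F : finFieldType) (n : nat) : rat := propA (@separable_mx F n).
Definition cA (F : finFieldType) (n : nat) : rat := propA (@cyclic_mx F n).
Definition ssA (F : finFieldType) (n : nat) : rat := propA (@semisimple_mx F n).

From HB Require Import structures.
From mathcomp Require Import all_boot all_order all_algebra all_field.
From mathcomp Require Import boolp.
Import GRing.Theory Num.Theory.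
Local Open Scope ring_scope.

(* Over a finite field of characteristic p the Frobenius map is onto, so a
   polynomial with zero derivative is a p-th power; hence a square-free
   polynomial is coprime to its derivative.  A matrix with square-free
   characteristic polynomial thus has distinct eigenvalues over the algebraic
   closure and is semisimple, which gives s_A <= ss_A.  Conversely the minimal
   polynomial of a semisimple matrix has no repeated roots, so a semisimple
   matrix is separable or not cyclic, and counting in A(n,q) gives
   ss_A <= s_A + (1 - c_A). *)

Lemma pFrobenius_poly {R : comNzRingType} {p} (pcharRp : p \in [pchar R])
    (h : {poly R}) :
  h ^+ p = map_poly (pFrobenius_aut pcharRp) h \Po 'X^p.
Proof.
have pcharP : p \in [pchar {poly R}] by rewrite pchar_poly.
rewrite -(pFrobenius_autE pcharP).
elim/poly_ind: h => [|h c IHh]; first by rewrite !rmorph0.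
rewrite !rmorphD !rmorphM /= IHh map_polyC map_polyX comp_polyX comp_polyC.
by rewrite !pFrobenius_autE rmorphXn.
Qed.

Lemma deriv_eq0_comp_Xn {R : idomainType} {p} {u : {poly R}} :
  p \in [pchar R] -> u^`() = 0 -> u = \poly_(i < size u) u`_(i * p) \Po 'X^p.
Proof.
move=> pcharRp u'0; have p_gt0 := prime_gt0 (pcharf_prime pcharRp).
apply/polyP => i; rewrite coef_comp_poly_Xn // coef_poly.
have [[j ->] | pNi] := altP (@dvdnP p i).
  rewrite mulnK //; case: ltnP => // le_u_j.
  by rewrite nth_default // (leq_trans le_u_j) ?leq_pmulr.
have i_gt0 : (0 < i)%N by case: i pNi; rewrite ?dvdn0.
have := congr1 (fun q : {poly R} => q`_i.-1) u'0.
rewrite coef_deriv coef0 prednK // -mulr_natr => /eqP.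
by rewrite mulf_eq0 -(dvdn_pcharf pcharRp) (negPf pNi) orbF => /eqP.
Qed.

Lemma finField_deriv_eq0_expr {F : finFieldType} {p} {u : {poly F}} :
  p \in [pchar F] -> u^`() = 0 -> exists h : {poly F}, u = h ^+ p.
Proof.
move=> pcharFp /(deriv_eq0_comp_Xn pcharFp) ->; set g := \poly_(_ < _) _.
have Frob_inj := fmorph_inj (pFrobenius_aut pcharFp).
exists (map_poly (invF Frob_inj) g).
rewrite [RHS](pFrobenius_poly pcharFp) -map_poly_comp map_poly_id // => a _ /=.
exact: f_invF.
Qed.

Lemma squarefree_poly_neq0 {F : fieldType} {P : {poly F}} :
  squarefree_poly P -> P != 0.
Proof.
move=> sqP; apply/eqP => P0.
by have := sqP 'X; rewrite P0 dvdp0 size_polyX => /(_ isT).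
Qed.

Lemma separable_squarefree {F : fieldType} {P : {poly F}} :
  separable_poly P -> squarefree_poly P.
Proof.
by move=> sepP d /(separable_coprime sepP); rewrite coprimepp => /eqP->.
Qed.

Lemma finField_squarefree_separable {F : finFieldType} {P : {poly F}} :
  squarefree_poly P -> separable_poly P.
Proof.
move=> sqP; have P_neq0 := squarefree_poly_neq0 sqP.
apply/separable_polyP; split.
  apply/poly_square_freeP => u /negPf su; apply/negP; rewrite expr2 => uuP.
  have := sqP u uuP; rewrite leq_eqVlt su ltnS leqn0 size_poly_eq0 => /eqP u0.
  by move: uuP; rewrite u0 mulr0 dvd0p (negPf P_neq0).
move=> u uP su; apply/eqP => u'0.
have [p pr_p pcharFp] := finPcharP F.
have [h uE] := finField_deriv_eq0_expr pcharFp u'0.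
have /size1_polyC hC : (size h <= 1)%N.
  apply/sqP/(dvdp_trans _ uP).
  by rewrite uE -(subnKC (prime_gt1 pr_p)) !exprS mulrA dvdp_mulr.
by rewrite ltnNge uE hC -rmorphXn size_polyC_leq1 in su.
Qed.

Lemma separable_char_poly_diagonalizable {K : closedFieldType} {n}
    {A : 'M[K]_n.+1} :
  separable_poly (char_poly A) -> diagonalizable A.
Proof.
have [rs charAE] := closed_field_poly_normal (char_poly A).
rewrite (monicP (char_poly_monic A)) scale1r in charAE.
rewrite charAE separable_prod_XsubC => urs.
by apply/diagonalizableP; exists rs; rewrite // -charAE mxminpoly_dvd_char.
Qed.

Lemma diagonalizable_separable_mxminpoly {F : fieldType} {n} {A : 'M[F]_n.+1} :
  diagonalizable A -> separable_poly (mxminpoly A).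
Proof.
move=> /diagonalizableP[rs urs /dvdp_separable]; apply.
by rewrite separable_prod_XsubC.
Qed.

Lemma separable_mx_semisimple {F : finFieldType} {n} {x : 'M[F]_n.+1} :
  separable_mx x -> semisimple_mx x.
Proof.
move=> /finField_squarefree_separable sep_x.
apply: separable_char_poly_diagonalizable.
by rewrite -map_char_poly separable_map.
Qed.

Lemma semisimple_cyclic_mx_separable {F : finFieldType} {n} {x : 'M[F]_n.+1} :
  semisimple_mx x -> cyclic_mx x -> separable_mx x.
Proof.
move=> /diagonalizable_separable_mxminpoly + cyc_x.
by rewrite mxminpoly_map separable_map cyc_x => /separable_squarefree.
Qed.

Section Proportions.

Variables (F : finFieldType) (n : nat).
Implicit Types P Q R : 'M[F]_n.+1 -> Prop.

Lemma Aset1 : 1 \in Aset F n.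
Proof. by rewrite inE unitmx1; apply/forallP => i; rewrite mxE. Qed.

Lemma propA_le P Q : (forall x, P x -> Q x) -> propA P <= propA Q.
Proof.
move=> PQ; rewrite /propA ler_wpM2r ?invr_ge0 ?ler0n // ler_nat.
apply/subset_leq_card/subsetP => x; rewrite !inE => /andP[-> /asboolP/PQ].
by move/asboolP.
Qed.

Lemma propA_le_add P Q R :
  (forall x, P x -> Q x \/ R x) -> propA P <= propA Q + propA R.
Proof.
move=> PQR; rewrite /propA -mulrDl ler_wpM2r ?invr_ge0 ?ler0n // -natrD ler_nat.
apply: leq_trans (leq_card_setU _ _); apply/subset_leq_card/subsetP => x.
rewrite !inE => /andP[-> /asboolP/PQR[/asboolP-> // | /asboolP->]].
by rewrite orbT.
Qed.

Lemma propA_not P : propA (fun x => ~ P x) = 1 - propA P.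
Proof.
set S := [set x in Aset F n | `[< P x >]].
set T := [set x in Aset F n | `[< ~ P x >]].
have cardST : (#|S| + #|T|)%N = #|Aset F n|.
  rewrite -(cardsID [set x | `[< P x >]] (Aset F n)).
  by congr (_ + _)%N; apply: eq_card => x; rewrite !inE ?asbool_neg // andbC.
have A_neq0 : #|Aset F n|%:R != 0 :> rat.
  by rewrite pnatr_eq0 -lt0n; apply/card_gt0P; exists 1; apply: Aset1.
rewrite /propA -/S -/T -[X in X - _](divff A_neq0) -mulrBl.
congr (_ / _).
by rewrite -cardST natrD addrAC subrr add0r.
Qed.

End Proportions.

Theorem theorem5p11 (F : finFieldType) (n : nat) :
  sA F n <= ssA F n /\ ssA F n <= sA F n + (1 - cA F n).
Proof.
split; first by apply: propA_le => x; apply: separable_mx_semisimple.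
rewrite /cA -propA_not; apply: propA_le_add => x ss_x.
have [cyc_x | ncyc_x] := pselect (cyclic_mx x); last by right; exact: ncyc_x.
by left; apply: semisimple_cyclic_mx_separable ss_x cyc_x.
Qed.
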